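(* Suppose the market satisfies the bounded-ratio assumption. Let $\Theta$ be a totally bounded subset of $L^\infty(\Delta_n,\overline{\Delta}_n)$ (with the supremum metric) and let $\nu_0$ be any Borel probability measure on $\Theta$ with full support. Then $\lim_{t\to\infty}\frac1t\log\frac{\widehat V(t)}{V^*(t)}=0$, i.e. Cover's portfolio satisfies the universality property.
   Context: $n\ge2$; $\Delta_n$, $\overline{\Delta}_n$ the open and closed unit simplices in $\mathbb R^n$. Bounded-ratio assumption: the market weight sequence $\{\mu(t)\}_{t\ge0}\subset\Delta_n$ satisfies $\frac1M\le\mu_i(t+1)/\mu_i(t)\le M$ for some constant $M>0$ and all $i,t$. $L^\infty(\Delta_n,\overline{\Delta}_n)$ is the set of maps $\Delta_n\to\overline{\Delta}_n$ with metric $\|\pi-\eta\|_\infty=\sup_p|\pi(p)-\eta(p)|$; $\Theta$ carries the induced topology, and $(p,\pi)\mapsto\pi(p)$ is assumed jointly measurable. Relative value: $V_\pi(0)=1$, $V_\pi(t+1)=V_\pi(t)\sum_i\pi_i(\mu(t))\mu_i(t+1)/\mu_i(t)$. $\widehat V(t)=\int_\Theta V_\pi(t)\,d\nu_0(\pi)$ (the relative value of Cover's portfolio $\widehat\pi(t)=\int\pi(\mu(t))\,d\nu_t(\pi)$, $\nu_t\propto V_\pi(t)\nu_0$), and $V^*(t)=\sup_{\pi\in\Theta}V_\pi(t)$. Full support: the smallest closed set of full measure is $\Theta$. *)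

From HB Require Import structures.
From mathcomp Require Import all_boot all_order all_algebra.
From mathcomp Require Import all_classical all_reals all_analysis.
Unset Printing Implicit Defensive.
Import Order.TTheory GRing.Theory Num.Theory.
Local Open Scope classical_set_scope.
Local Open Scope ring_scope.

(* Vectors of R^n are represented as n.-tuple R (which carries the product,
   i.e. Borel, sigma-algebra in MathComp-Analysis). *)

Definition open_simplex (R : realType) (n : nat) : set (n.-tuple R) :=
  [set p | (forall i : 'I_n, 0 < tnth p i) /\ \sum_(i < n) tnth p i = 1].

Definition closed_simplex (R : realType) (n : nat) : set (n.-tuple R) :=
  [set p | (forall i : 'I_n, 0 <= tnth p i) /\ \sum_(i < n) tnth p i = 1].

Definition vdist (R : realType) (n : nat) (x y : n.-tuple R) : R :=
  Num.sqrt (\sum_(i < n) (tnth x i - tnth y i) ^+ 2).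

Definition supdist (R : realType) (n : nat)
    (f g : n.-tuple R -> n.-tuple R) : R :=
  sup [set vdist R n (f p) (g p) | p in open_simplex R n].

(* elements of L^infty(Delta_n, closed Delta_n), as total functions whose
   values on Delta_n lie in the closed simplex (only values on Delta_n matter) *)
Definition Linf_map (R : realType) (n : nat) (f : n.-tuple R -> n.-tuple R) :=
  forall p, open_simplex R n p -> closed_simplex R n (f p).

Definition dist_open (R : realType) (T : Type) (dist : T -> T -> R)
    (U : set T) : Prop :=
  forall a, U a -> exists2 e : R, 0 < e & forall b, dist a b < e -> U b.

Definition dist_closed (R : realType) (T : Type) (dist : T -> T -> R)
    (C : set T) : Prop := dist_open R T dist (~` C).

Fixpoint relvalue (R : realType) (n : nat) (mu : nat -> n.-tuple R)
    (pi : n.-tuple R -> n.-tuple R) (t : nat) : R :=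
  match t with
  | 0 => 1
  | t'.+1 => relvalue R n mu pi t' *
      \sum_(i < n) tnth (pi (mu t')) i * (tnth (mu t'.+1) i / tnth (mu t') i)
  end.

From HB Require Import structures.
From mathcomp Require Import all_boot all_order all_algebra.
From mathcomp Require Import all_classical all_reals all_analysis.
From mathcomp Require Import measurable_realfun ring lra.
Import Order.TTheory GRing.Theory Num.Theory.
Local Open Scope classical_set_scope.
Local Open Scope ring_scope.

(* A portfolio's relative value is a product of growth factors lying in
   [1/M, M], and the growth factor of eta is at least (1 - n M^2 delta) times
   that of pi when the two maps differ by at most delta coordinatewise; hence
   e-close portfolios satisfy V_eta(t) >= (1 - 2 n M^2 e)^t V_pi(t) inside a
   ball of radius e.  Cover Theta by finitely many e-balls: each ball meeting
   Theta is open, so it has positive nu0-measure by full support, and some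
   w > 0 bounds all these measures from below.  A portfolio pi with
   V_pi(t) >= Vstar(t)/2 lies in one of the balls, so
   Vhat(t) >= w (1 - 2 n M^2 e)^t Vstar(t) / 2.  Thus (1/t) log(Vhat/Vstar) is
   squeezed between log(1 - 2 n M^2 e) + o(1) and 0, and e is arbitrary. *)

Set Implicit Arguments.
Unset Strict Implicit.

Lemma cvg_ln_geometric_lower (R : realType) (r : nat -> R) :
  (forall t, r t <= 1) ->
  (forall q, 0 < q < 1 -> exists2 del, 0 < del & forall t, del * q ^+ t <= r t) ->
  (fun t => t%:R^-1 * ln (r t)) @ \oo --> 0.
Proof.
move=> r_le1 r_ge; apply/cvgrPdist_le => eps eps_gt0.
set q := expR (- (eps / 2)).
have q_gt0 : 0 < q by exact: expR_gt0.
have [del del_gt0 r_ge_del] : exists2 del, 0 < del & forall t, del * q ^+ t <= r t.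
  by apply: r_ge; rewrite q_gt0 expR_lt1 oppr_lt0 divr_gt0.
near=> t.
have t_gt0 : 0 < t%:R :> R by near: t; exact: nbhs_infty_gtr.
have del_q_gt0 : 0 < del * q ^+ t by rewrite mulr_gt0 ?exprn_gt0.
have r_gt0 : 0 < r t := lt_le_trans del_q_gt0 (r_ge_del t).
have ln_r_ge : ln del - t%:R * (eps / 2) <= ln (r t).
  have := r_ge_del t; rewrite -ler_ln ?posrE // lnM ?posrE ?exprn_gt0 //.
  by rewrite lnXn // expRK mulNrn -(mulr_natl (eps / 2)).
have ln_del_le : - ln del <= t%:R * (eps / 2).
  by rewrite -ler_pdivrMr ?divr_gt0 //; near: t; exact: nbhs_infty_ger.
rewrite sub0r normrN normrM ger0_norm ?invr_ge0 // ler0_norm ?ln_le0 //.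
rewrite mulrC ler_pdivrMr //; lra.
Unshelve. all: by end_near.
Qed.

Lemma coord_le_vdist (R : realType) (n : nat) (x y : n.-tuple R) i :
  `|tnth x i - tnth y i| <= vdist R n x y.
Proof.
rewrite /vdist -sqrtr_sqr ler_wsqrtr // (bigD1 i) //= lerDl.
by apply: sumr_ge0 => j _; exact: sqr_ge0.
Qed.

Lemma vdist_closed_simplex_le (R : realType) (n : nat) (x y : n.-tuple R) :
  closed_simplex R n x -> closed_simplex R n y -> vdist R n x y <= Num.sqrt n%:R.
Proof.
have coord_le1 (z : n.-tuple R) j : closed_simplex R n z -> tnth z j <= 1.
  case=> z_ge0 <-; rewrite (bigD1 j) //= lerDl.
  by apply: sumr_ge0 => k _; exact: z_ge0.
move=> x_cl y_cl; rewrite /vdist ler_wsqrtr // -[n in n%:R]card_ord -sumr_const.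
apply: ler_sum => j _.
have := coord_le1 _ j x_cl; have := coord_le1 _ j y_cl.
have := x_cl.1 j; have := y_cl.1 j; rewrite expr2; nra.
Qed.

Lemma coord_le_supdist (R : realType) (n : nat) f g p i :
  Linf_map R n f -> Linf_map R n g -> open_simplex R n p ->
  `|tnth (f p) i - tnth (g p) i| <= supdist R n f g.
Proof.
move=> f_Linf g_Linf p_simplex; apply: le_trans (coord_le_vdist _ _ i) _.
apply: ub_le_sup; last by exists p.
exists (Num.sqrt n%:R) => _ [q q_simplex <-].
exact: vdist_closed_simplex_le (f_Linf _ q_simplex) (g_Linf _ q_simplex).
Qed.

Lemma open_simplex_measurable (R : realType) (n : nat) :
  measurable (open_simplex R n).
Proof.
have -> : open_simplex R n =
    (\bigcap_(i in [set: 'I_n]) ((fun p : n.-tuple R => tnth p i) @^-1` `]0, +oo[))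
    `&` ((fun p : n.-tuple R => \sum_(i < n) tnth p i) @^-1` [set 1]).
  apply/seteqP; split => p /=.
  - by case=> p_gt0 p_sum; split => // i _ /=; rewrite in_itv /= andbT p_gt0.
  - by case=> p_gt0 p_sum; split => // i; have := p_gt0 i I; rewrite /= in_itv /= andbT.
apply: measurableI.
- apply: fin_bigcap_measurable; first exact: finite_finset.
  move=> i _; rewrite -[X in measurable X]setTI.
  by apply: measurable_tnth => //; exact: measurable_itv.
- rewrite -[X in measurable X]setTI.
  have sum_measurable : measurable_fun [set: n.-tuple R]
      (fun p : n.-tuple R => \sum_(i < n) tnth p i).
    by apply: measurable_sum => i; exact: measurable_tnth.
  exact: sum_measurable.
Qed.

Lemma probability_setT_neq0 (d : measure_display) (T : measurableType d)
    (R : realType) (P : probability T R) : [set: T] !=set0.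
Proof.
apply/set0P/eqP => T_empty; have := probability_setT P.
by rewrite T_empty measure0 => /esym/eqP; rewrite eqe oner_eq0.
Qed.

Section relative_value.
Variables (R : realType) (n : nat) (mu : nat -> n.-tuple R) (M : R).
Hypothesis mu_simplex : forall t, open_simplex R n (mu t).
Hypothesis M_gt0 : 0 < M.
Hypothesis mu_ratio : forall t (i : 'I_n),
  M^-1 <= tnth (mu t.+1) i / tnth (mu t) i <= M.

Definition relgrowth (f : n.-tuple R -> n.-tuple R) (t : nat) : R :=
  \sum_(i < n) tnth (f (mu t)) i * (tnth (mu t.+1) i / tnth (mu t) i).

Lemma relvalueS f t : relvalue R n mu f t.+1 = relvalue R n mu f t * relgrowth f t.
Proof. by []. Qed.

Lemma relgrowth_bounds f t : Linf_map R n f -> M^-1 <= relgrowth f t <= M.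
Proof.
move=> /(_ _ (mu_simplex t))[f_ge0 f_sum1].
apply/andP; split.
- rewrite -[M^-1]mul1r -f_sum1 mulr_suml.
  by apply: ler_sum => i _; apply: ler_wpM2l => //; case/andP: (mu_ratio t i).
- rewrite -[M]mul1r -f_sum1 mulr_suml.
  by apply: ler_sum => i _; apply: ler_wpM2l => //; case/andP: (mu_ratio t i).
Qed.

Lemma relgrowth_lip f g t delta : Linf_map R n f -> Linf_map R n g -> 0 <= delta ->
  (forall i, `|tnth (f (mu t)) i - tnth (g (mu t)) i| <= delta) ->
  relgrowth g t * (1 - n%:R * M ^+ 2 * delta) <= relgrowth f t.
Proof.
move=> f_Linf g_Linf delta_ge0 fg_le.
have growth_diff : relgrowth g t - relgrowth f t <= n%:R * delta * M.
  have -> : n%:R * delta * M = \sum_(i < n) delta * M.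
    by rewrite sumr_const card_ord -mulrA mulr_natl.
  rewrite /relgrowth -sumrB; apply: ler_sum => i _; rewrite -mulrBl.
  have /andP[ratio_ge ratio_le] := mu_ratio t i.
  have ratio_ge0 : 0 <= tnth (mu t.+1) i / tnth (mu t) i.
    by apply: le_trans ratio_ge; rewrite invr_ge0 ltW.
  apply: le_trans (ler_wpM2r ratio_ge0 (_ : _ <= delta)) (ler_wpM2l _ ratio_le) => //.
  by apply: le_trans (ler_norm _) _; rewrite distrC.
have [g_ge _] := andP (relgrowth_bounds t g_Linf).
have : M^-1 * (n%:R * M ^+ 2 * delta) <= relgrowth g t * (n%:R * M ^+ 2 * delta).
  by apply: ler_wpM2r => //; rewrite !mulr_ge0 // ltW.
have -> : M^-1 * (n%:R * M ^+ 2 * delta) = n%:R * delta * M.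
  by rewrite expr2; field; rewrite gt_eqF.
lra.
Qed.

Lemma relvalue_bounds f t : Linf_map R n f -> 0 < relvalue R n mu f t <= M ^+ t.
Proof.
move=> f_Linf; elim: t => [|t /andP[V_gt0 V_le]]; first by rewrite ltr01 expr0 lexx.
have /andP[growth_ge growth_le] := relgrowth_bounds t f_Linf.
have growth_gt0 : 0 < relgrowth f t by apply: lt_le_trans growth_ge; rewrite invr_gt0.
by rewrite relvalueS mulr_gt0 //= exprSr ler_pM // ltW.
Qed.

Lemma relvalue_lip f g delta t : Linf_map R n f -> Linf_map R n g ->
  0 <= delta -> 0 <= 1 - n%:R * M ^+ 2 * delta ->
  (forall p, open_simplex R n p -> forall i,
     `|tnth (f p) i - tnth (g p) i| <= delta) ->
  relvalue R n mu g t * (1 - n%:R * M ^+ 2 * delta) ^+ t <= relvalue R n mu f t.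
Proof.
move=> f_Linf g_Linf delta_ge0 q_ge0 fg_le; elim: t => [|t IH]; first by rewrite mulr1.
set q := 1 - _ in q_ge0 IH *.
have g_ge0 := ltW (andP (relvalue_bounds t g_Linf)).1.
have growth_ge0 : 0 <= relgrowth g t.
  have /andP[growth_ge _] := relgrowth_bounds t g_Linf.
  by apply: le_trans growth_ge; rewrite invr_ge0 ltW.
rewrite !relvalueS exprSr mulrACA.
apply: ler_pM => //; rewrite ?mulr_ge0 ?exprn_ge0 //.
by apply: relgrowth_lip => //; apply: fg_le.
Qed.

Section portfolio_family.
Variables (d : measure_display) (T : measurableType d).
Variables (pi : T -> n.-tuple R -> n.-tuple R) (nu0 : probability T R).
Local Notation pidist := (fun a b : T => supdist R n (pi a) (pi b)).
Hypothesis n_gt0 : (0 < n)%N.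
Hypothesis pi_Linf : forall th, Linf_map R n (pi th).
Hypothesis pi_measurable : measurable_fun
  [set x : n.-tuple R * T | open_simplex R n x.1] (fun x => pi x.2 x.1).
Hypothesis T_borel : @measurable d T = <<s [set U | dist_open R T pidist U] >>.
Hypothesis pi_totally_bounded : forall e : R, 0 < e ->
  exists (k : nat) (c : 'I_k -> n.-tuple R -> n.-tuple R),
    (forall j, Linf_map R n (c j)) /\ forall th, exists j, supdist R n (pi th) (c j) < e.
Hypothesis nu0_full_support : forall C : set T,
  dist_closed R T pidist C -> nu0 C = 1%E -> C = setT.

Lemma relvalue_pi_measurable t :
  measurable_fun [set: T] (fun th => relvalue R n mu (pi th) t).
Proof.
have pi_mu_measurable s : measurable_fun [set: T] (fun th => pi th (mu s)).
  have simplexT_measurable : measurable [set x : n.-tuple R * T | open_simplex R n x.1].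
    have -> : [set x : n.-tuple R * T | open_simplex R n x.1] = open_simplex R n `*` setT.
      by apply/seteqP; split => x /=; [move=> ?; split|case].
    by apply: measurableX => //; exact: open_simplex_measurable.
  apply: (measurable_comp simplexT_measurable _ pi_measurable (pair1_measurable _)).
  by move=> _ [th _ <-]; exact: mu_simplex.
elim: t => [|t IH]; first exact: measurable_cst.
apply: measurable_funM => //; apply: measurable_sum => i.
apply: measurable_funM; last exact: measurable_cst.
exact: measurableT_comp (measurable_tnth i) (pi_mu_measurable t).
Qed.

Definition best_value t := sup [set relvalue R n mu (pi th) t | th in [set: T]].

Definition cover_value t :=
  fine (\int[nu0]_(th in setT) (relvalue R n mu (pi th) t)%:E).

Lemma has_sup_relvalue t : has_sup [set relvalue R n mu (pi th) t | th in [set: T]].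
Proof.
have [th _] := probability_setT_neq0 nu0.
split; first by exists (relvalue R n mu (pi th) t), th.
by exists (M ^+ t) => _ [th' _ <-]; case/andP: (relvalue_bounds t (pi_Linf th')).
Qed.

Lemma relvalue_le_best th t : relvalue R n mu (pi th) t <= best_value t.
Proof. by apply: ub_le_sup; [case: (has_sup_relvalue t)|exists th]. Qed.

Lemma best_value_gt0 t : 0 < best_value t.
Proof.
have [th _] := probability_setT_neq0 nu0.
exact: lt_le_trans (andP (relvalue_bounds t (pi_Linf th))).1 (relvalue_le_best th t).
Qed.

Lemma integral_relvalue_le c t : (forall th, relvalue R n mu (pi th) t <= c) ->
  (\int[nu0]_(th in setT) (relvalue R n mu (pi th) t)%:E <= c%:E)%E.
Proof.
move=> relvalue_le.
rewrite -[c%:E]mule1 -(probability_setT nu0) -integral_cst //.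
apply: ge0_le_integral => //.
- by move=> th _; rewrite lee_fin ltW //; case/andP: (relvalue_bounds t (pi_Linf th)).
- exact/measurable_EFinP/relvalue_pi_measurable.
- by move=> th _; rewrite lee_fin.
Qed.

Lemma integral_relvalueE t :
  (\int[nu0]_(th in setT) (relvalue R n mu (pi th) t)%:E = (cover_value t)%:E)%E.
Proof.
rewrite fineK // ge0_fin_numE; last first.
  apply: integral_ge0 => th _.
  by rewrite lee_fin ltW //; case/andP: (relvalue_bounds t (pi_Linf th)).
apply: le_lt_trans (ltry (M ^+ t)); apply: integral_relvalue_le => th.
by case/andP: (relvalue_bounds t (pi_Linf th)).
Qed.

Lemma cover_value_le_best t : cover_value t <= best_value t.
Proof.
rewrite -lee_fin -integral_relvalueE; apply: integral_relvalue_le => th.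
exact: relvalue_le_best.
Qed.

(* Balls are defined by coordinatewise bounds, which makes them open without
   using the triangle inequality for [supdist]. *)
Definition coord_ball (c : n.-tuple R -> n.-tuple R) (e : R) : set T :=
  [set th | exists2 r, r < e & forall p, open_simplex R n p ->
    forall i, `|tnth (pi th p) i - tnth (c p) i| <= r].

Lemma supdist_lt_coord_ball c e th : Linf_map R n c ->
  supdist R n (pi th) c < e -> coord_ball c e th.
Proof.
move=> c_Linf dist_lt; exists (supdist R n (pi th) c) => // p p_simplex i.
exact: coord_le_supdist.
Qed.

Lemma coord_ball_open c e : dist_open R T pidist (coord_ball c e).
Proof.
move=> a [r r_lt a_near]; exists ((e - r) / 2); first by rewrite divr_gt0 // subr_gt0.
move=> b ab_lt; exists (r + (e - r) / 2); first lra.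
move=> p p_simplex i.
have ab_le := coord_le_supdist i (pi_Linf a) (pi_Linf b) p_simplex.
have := ler_distD (tnth (pi a p) i) (tnth (pi b p) i) (tnth (c p) i).
have := a_near p p_simplex i; rewrite distrC in ab_le; lra.
Qed.

Lemma coord_ball_measurable c e : measurable (coord_ball c e).
Proof. by rewrite T_borel; apply: sub_sigma_algebra; exact: coord_ball_open. Qed.

Lemma coord_ball_gt0 c e th : coord_ball c e th -> (0 < nu0 (coord_ball c e))%E.
Proof.
move=> th_in; rewrite lt0e measure_ge0 andbT; apply/negP => /eqP ball0.
suff : (~` coord_ball c e) = setT.
  by move/(congr1 (@^~ th)); rewrite propeqE => -[_ /(_ I)].
apply: nu0_full_support.
- by rewrite /dist_closed setCK; exact: coord_ball_open.
- by rewrite probability_setC ?ball0 ?sube0 //; exact: coord_ball_measurable.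
Qed.

Lemma relvalue_coord_ball c e th th' t :
  0 <= e -> 0 <= 1 - n%:R * M ^+ 2 * (2 * e) ->
  coord_ball c e th -> coord_ball c e th' ->
  relvalue R n mu (pi th) t * (1 - n%:R * M ^+ 2 * (2 * e)) ^+ t
    <= relvalue R n mu (pi th') t.
Proof.
move=> e_ge0 q_ge0 [r r_lt th_near] [r' r'_lt th'_near].
apply: relvalue_lip => // [|p p_simplex i]; first by rewrite mulr_ge0.
have := ler_distD (tnth (c p) i) (tnth (pi th' p) i) (tnth (pi th p) i).
have := th_near p p_simplex i; have := th'_near p p_simplex i.
rewrite (distrC (tnth (c p) i) (tnth (pi th p) i)); lra.
Qed.

Lemma cover_value_ge_coord_ball c e th t :
  0 <= e -> 0 <= 1 - n%:R * M ^+ 2 * (2 * e) -> coord_ball c e th ->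
  fine (nu0 (coord_ball c e)) *
    (relvalue R n mu (pi th) t * (1 - n%:R * M ^+ 2 * (2 * e)) ^+ t)
  <= cover_value t.
Proof.
move=> e_ge0 q_ge0 th_in; set B := coord_ball c e; set lower := _ * _ ^+ t.
have B_measurable : measurable B := coord_ball_measurable c e.
have lower_ge0 : 0 <= lower.
  by rewrite mulr_ge0 ?exprn_ge0 // ltW //; case/andP: (relvalue_bounds t (pi_Linf th)).
rewrite -lee_fin -integral_relvalueE EFinM fineK; last first.
  by rewrite ge0_fin_numE // (le_lt_trans (probability_le1 nu0 B_measurable)) ?ltry.
rewrite muleC -integral_cst //.
apply: (@le_trans _ _ (\int[nu0]_(th' in B) (relvalue R n mu (pi th') t)%:E)%E).
  apply: ge0_le_integral => //.
  - apply: measurable_funS measurableT _ _ => //.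
    exact/measurable_EFinP/relvalue_pi_measurable.
  - move=> th' th'_in; rewrite lee_fin.
    exact: relvalue_coord_ball e_ge0 q_ge0 th_in th'_in.
apply: (ge0_subset_integral _ B_measurable measurableT) => //.
- exact/measurable_EFinP/relvalue_pi_measurable.
- by move=> th' _; rewrite lee_fin ltW //; case/andP: (relvalue_bounds t (pi_Linf th')).
Qed.

Lemma cover_value_ge_geometric q : 0 < q < 1 ->
  exists2 del, 0 < del & forall t, del * q ^+ t * best_value t <= cover_value t.
Proof.
move=> /andP[q_gt0 q_lt1].
have nM_gt0 : 0 < n%:R * M ^+ 2 by rewrite mulr_gt0 ?ltr0n ?exprn_gt0.
pose e := (1 - q) / (2 * (n%:R * M ^+ 2)).
have e_gt0 : 0 < e by rewrite /e divr_gt0 ?subr_gt0 // mulr_gt0.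
have q_eq : 1 - n%:R * M ^+ 2 * (2 * e) = q.
  by rewrite /e; field; rewrite gt_eqF // pnatr_eq0 -lt0n.
have [k [c [c_Linf c_cover]]] := pi_totally_bounded e_gt0.
pose B j := coord_ball (c j) e.
pose w j := if (0 < nu0 (B j))%E then fine (nu0 (B j)) else 1.
have w_bounds j : 0 < w j <= 1.
  rewrite /w; case: ifPn => [B_gt0|_]; last by rewrite ltr01 lexx.
  have B_le1 := probability_le1 nu0 (coord_ball_measurable (c j) e).
  have B_fin : nu0 (B j) = (fine (nu0 (B j)))%:E.
    by rewrite fineK // ge0_fin_numE // (le_lt_trans B_le1) ?ltry.
  by rewrite -lte_fin -lee_fin -B_fin B_gt0.
have prod_le_w j : \prod_i w i <= w j.
  rewrite (bigD1 j) //= ler_piMr ?(ltW (andP (w_bounds j)).1) //.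
  by apply: prodr_ile1 => i _; case/andP: (w_bounds i) => /ltW -> ->.
exists (\prod_j w j / 2).
  by rewrite divr_gt0 // prodr_gt0 // => j _; case/andP: (w_bounds j).
move=> t; have best_gt0 := best_value_gt0 t.
have [_ [th _ <-] th_near_best] :=
  sup_adherent (divr_gt0 best_gt0 (ltr0n R 2)) (has_sup_relvalue t).
have [j th_in] : exists j, B j th.
  by have [j dist_lt] := c_cover th; exists j; exact: supdist_lt_coord_ball.
have := cover_value_ge_coord_ball t (ltW e_gt0) _ th_in.
rewrite q_eq => /(_ (ltW q_gt0)).
have -> : fine (nu0 (coord_ball (c j) e)) = w j by rewrite /w (coord_ball_gt0 th_in).
apply: le_trans.
have -> : \prod_i w i / 2 * q ^+ t * best_value t
  = q ^+ t * (\prod_i w i * (best_value t / 2)) by ring.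
have -> : w j * (relvalue R n mu (pi th) t * q ^+ t)
  = q ^+ t * (w j * relvalue R n mu (pi th) t) by ring.
apply: ler_wpM2l; first exact: exprn_ge0 (ltW q_gt0).
apply: ler_pM => //; last by move: th_near_best; rewrite -/(best_value t) => ?; lra.
- by apply: prodr_ge0 => i _; case/andP: (w_bounds i) => /ltW.
- by rewrite divr_ge0 // ltW.
Qed.

End portfolio_family.
End relative_value.

(* Theta is given as the image of an injective parametrisation
   pi : T -> L^infty(Delta_n, closed Delta_n), where the measurable space T
   carries exactly the Borel sigma-algebra of the sup metric. *)
Theorem lemma3p5 (R : realType) (n : nat) (hn : (2 <= n)%N)
    (mu : nat -> n.-tuple R) (hmu : forall t, open_simplex R n (mu t))
    (M : R) (hM : 0 < M)
    (hratio : forall (t : nat) (i : 'I_n),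
        M^-1 <= tnth (mu t.+1) i / tnth (mu t) i <= M)
    (d : measure_display) (T : measurableType d)
    (pi : T -> n.-tuple R -> n.-tuple R)
    (hpi : forall th, Linf_map R n (pi th))
    (hinj : forall a b, (forall p, open_simplex R n p -> pi a p = pi b p) -> a = b)
    (hborel : @measurable d T =
        <<s [set U : set T | dist_open R T (fun a b => supdist R n (pi a) (pi b)) U] >>)
    (htotbdd : forall e : R, 0 < e ->
        exists (k : nat) (c : 'I_k -> n.-tuple R -> n.-tuple R),
          (forall j, Linf_map R n (c j)) /\
          forall th : T, exists j, supdist R n (pi th) (c j) < e)
    (hjoint : measurable_fun
        [set x : n.-tuple R * T | open_simplex R n x.1]
        (fun x : n.-tuple R * T => pi x.2 x.1))
    (nu0 : probability T R)
    (hsupp : forall C : set T,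
        dist_closed R T (fun a b => supdist R n (pi a) (pi b)) C ->
        nu0 C = 1%E -> C = setT) :
  let Vhat t := fine (\int[nu0]_(th in setT) (relvalue R n mu (pi th) t)%:E) in
  let Vstar t := sup [set relvalue R n mu (pi th) t | th in [set: T]] in
  (fun t : nat => (t%:R)^-1 * ln (Vhat t / Vstar t)) @ \oo --> 0.
Proof.
move=> Vhat Vstar.
have best_gt0 := best_value_gt0 hmu hM hratio nu0 hpi.
apply: cvg_ln_geometric_lower => [t|q q_bounds].
  rewrite ler_pdivrMr ?mul1r; last exact: best_gt0.
  exact (cover_value_le_best hmu hM hratio nu0 hpi hjoint t).
have [del del_gt0 cover_ge] := cover_value_ge_geometric hmu hM hratio
  (ltnW hn) hpi hjoint hborel htotbdd hsupp q_bounds.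
by exists del => // t; rewrite ler_pdivlMr; [exact: cover_ge | exact: best_gt0].
Qed.
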